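(* Let $(\varphi_n(x))_{n\in\mathbb{N}}$ be a symplectic basis. Then for every symplectic power series $\varphi(x)$ there exists a unique sequence $(a_n)_{n\in\mathbb{N}}$ of complex numbers such that for each $k\ge0$, $\varphi(x)-\sum_{i=0}^k a_i\varphi_i(x)\in\mathfrak m^{2k+2}$. Consequently $\varphi(x)=\sum_{i\ge0}a_i\varphi_i(x)$, the sum converging in the $\mathfrak m$-adic topology of $\mathbb{C}[[x]]$.
   Context: A formal power series $\varphi(x)=\sum_{i\ge0}\gamma_i x^i\in\mathbb{C}[[x]]$ is called symplectic if for every $m\ge1$ one has $\sum_{k=0}^{m-1}(-1)^k\binom{m-1}{k}\gamma_{m+k}=0$. Let $\mathfrak m=x\,\mathbb{C}[[x]]$ be the maximal ideal of $\mathbb{C}[[x]]$. A symplectic basis is a sequence $(\varphi_n(x))_{n\in\mathbb{N}}$ of symplectic power series such that each $\varphi_n(x)\in\mathfrak m^{2n}$ and its class in $\mathfrak m^{2n}/\mathfrak m^{2n+1}$ is nonzero. *)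

From mathcomp Require Import all_boot all_order all_algebra.
From mathcomp Require Import complex.
From mathcomp Require Import reals.
Set Implicit Arguments. Unset Strict Implicit. Unset Printing Implicit Defensive.
Import GRing.Theory Num.Theory.
Local Open Scope ring_scope.

Definition Cplx (R : realType) := R[i].

(* A formal power series in C[[x]] is represented by its coefficient
   sequence gamma : nat -> C, i.e. phi(x) = sum_i gamma i x^i. *)
Definition fps (R : realType) := nat -> Cplx R.

Definition symplectic (R : realType) (phi : fps R) : Prop :=
  forall m : nat, (1 <= m)%N ->
    \sum_(0 <= k < m) (-1) ^+ k * ('C(m.-1, k))%:R * phi (m + k)%N = 0.

(* phi belongs to m^n (m = x C[[x]]): all coefficients of degree < n vanish. *)
Definition in_mpow (R : realType) (n : nat) (phi : fps R) : Prop :=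
  forall j : nat, (j < n)%N -> phi j = 0.

(* Symplectic basis: each phi_n symplectic, phi_n in m^{2n},
   and its class in m^{2n}/m^{2n+1} nonzero (coefficient of x^{2n} nonzero). *)
Definition symplectic_basis (R : realType) (phis : nat -> fps R) : Prop :=
  forall n : nat, [/\ symplectic (phis n), in_mpow n.*2 (phis n)
                    & phis n n.*2 != 0].

Definition residual (R : realType) (phi : fps R) (phis : nat -> fps R)
  (a : nat -> Cplx R) (k : nat) : fps R :=
  fun j => phi j - \sum_(0 <= i < k.+1) a i * phis i j.

From mathcomp Require Import all_boot all_order all_algebra.
From mathcomp Require Import complex reals.
From Stdlib Require Import FunctionalExtensionality.
Set Implicit Arguments. Unset Strict Implicit. Unset Printing Implicit Defensive.
Import GRing.Theory Num.Theory.
Local Open Scope ring_scope.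

(* The coefficients are forced one at a time.  If [psi] is symplectic and lies
   in m^(2k+1), the relation of index k+1 reduces to its last term, the
   coefficient of x^(2k+1); so symplectic series skip odd orders, and modulo
   m^(2k+2) every symplectic series in m^(2k) is a multiple of phi_k.  Hence,
   given a_0, ..., a_(k-1) with phi - sum_(i<k) a_i phi_i in m^(2k), there is
   exactly one a_k pushing the remainder into m^(2k+2): the quotient of the
   x^(2k) coefficients of the remainder and of phi_k. *)

Section Symplectic.
Variable R : realType.
Implicit Types (psi phi : fps R) (phis : nat -> fps R) (a b : nat -> Cplx R).

(* Unlike [residual], sums only the first [k] terms: [residual phi phis a k]
   is convertible to [residual_lt phi phis a k.+1]. *)
Definition residual_lt phi phis a k : fps R :=
  fun j => phi j - \sum_(0 <= i < k) a i * phis i j.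

Lemma residual_ltS phi phis a k j :
  residual_lt phi phis a k.+1 j = residual_lt phi phis a k j - a k * phis k j.
Proof. by rewrite /residual_lt big_nat_recr //= opprD addrA. Qed.

Lemma eq_residual_lt phi phis a b k :
  (forall i, (i < k)%N -> a i = b i) ->
  residual_lt phi phis a k =1 residual_lt phi phis b k.
Proof.
by move=> eq_ab j; congr (_ - _); apply: eq_big_nat => i /andP[_ /eq_ab ->].
Qed.

Lemma in_mpowW m n psi : (m <= n)%N -> in_mpow n psi -> in_mpow m psi.
Proof. by move=> le_mn psi_n j lt_jm; apply: psi_n (leq_trans lt_jm le_mn). Qed.

Lemma symplectic_residual_lt phi phis a k :
  (forall i, symplectic (phis i)) -> symplectic phi ->
  symplectic (residual_lt phi phis a k).
Proof.
move=> sympl_phis sympl_phi m m_gt0.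
under eq_bigr => l _ do rewrite mulrBr mulr_sumr.
rewrite sumrB sympl_phi // sub0r exchange_big /= big1 ?oppr0 // => i _.
under eq_bigr => l _ do rewrite mulrCA.
by rewrite -mulr_sumr sympl_phis // mulr0.
Qed.

Lemma symplectic_mpow_odd psi k :
  symplectic psi -> in_mpow k.*2.+1 psi -> in_mpow k.*2.+2 psi.
Proof.
move=> sympl_psi psi_odd j.
rewrite ltnS leq_eqVlt => /predU1P[->|]; last exact: psi_odd.
have := sympl_psi k.+1 isT; rewrite big_nat_recr //= big1_seq ?add0r.
  by rewrite binn mulr1 addSn addnn => /eqP; rewrite mulf_eq0 signr_eq0 => /eqP.
move=> l; rewrite mem_index_iota => /andP[_ lt_lk].
by rewrite psi_odd ?mulr0 // addSn ltnS -addnn ltn_add2l.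
Qed.

Section Basis.
Variables (phis : nat -> fps R) (phi : fps R).
Hypotheses (basis : symplectic_basis phis) (sympl_phi : symplectic phi).

Lemma residual_lt_step a k :
  in_mpow k.*2 (residual_lt phi phis a k) ->
  in_mpow k.*2.+2 (residual_lt phi phis a k.+1) <->
  a k = residual_lt phi phis a k k.*2 / phis k k.*2.
Proof.
have [_ phis_k_low phis_k_nz] := basis k.
move=> res_k; have res_low j : (j < k.*2)%N -> residual_lt phi phis a k.+1 j = 0.
  by move=> lt_jk; rewrite residual_ltS res_k // phis_k_low // mulr0 subr0.
have lead : residual_lt phi phis a k.+1 k.*2 =
            (residual_lt phi phis a k k.*2 / phis k k.*2 - a k) * phis k k.*2.
  by rewrite residual_ltS mulrBl divfK.
split=> [res_kS | a_k].
  apply/eqP; rewrite eq_sym -subr_eq0 -(mulIr_eq0 _ (mulIf phis_k_nz)) -lead.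
  by apply/eqP/res_kS; rewrite ltnS leqW.
apply: symplectic_mpow_odd.
  by apply: symplectic_residual_lt => // i; have [] := basis i.
move=> j; rewrite ltnS leq_eqVlt => /predU1P[->|]; last exact: res_low.
by rewrite lead -a_k subrr mul0r.
Qed.

Fixpoint greedy_coefs n : nat -> Cplx R :=
  if n is n.+1 then
    let a := greedy_coefs n in
    fun i => if i == n then residual_lt phi phis a n n.*2 / phis n n.*2 else a i
  else fun=> 0.

Lemma greedy_coefs_stable n i : (i < n)%N -> greedy_coefs n i = greedy_coefs i.+1 i.
Proof.
elim: n => // n IH; rewrite ltnS leq_eqVlt => /predU1P[-> //|lt_in].
by rewrite /= (ltn_eqF lt_in) IH.
Qed.

Definition symplectic_coef i := greedy_coefs i.+1 i.

Lemma symplectic_coefE k : symplectic_coef k =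
  residual_lt phi phis symplectic_coef k k.*2 / phis k k.*2.
Proof.
rewrite /symplectic_coef /= eqxx; congr (_ / _).
by apply: eq_residual_lt => i lt_ik; rewrite greedy_coefs_stable.
Qed.

Lemma residual_symplectic_coef k :
  in_mpow k.*2 (residual_lt phi phis symplectic_coef k).
Proof.
elim: k => [j //|k IH].
by rewrite doubleS; apply/(residual_lt_step IH)/symplectic_coefE.
Qed.

Lemma symplectic_coef_unique a :
  (forall k, in_mpow (k.*2 + 2) (residual phi phis a k)) -> a =1 symplectic_coef.
Proof.
move=> res_a; elim/ltn_ind => k IH.
have res_a_k : in_mpow k.*2 (residual_lt phi phis a k).
  by case: k {IH} => [j //|k]; rewrite doubleS -addn2; apply: res_a.
rewrite symplectic_coefE -(eq_residual_lt _ _ IH).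
by apply/(residual_lt_step res_a_k); rewrite -addn2; exact: res_a.
Qed.

End Basis.
End Symplectic.

Theorem lemma2p3 (R : realType) (phis : nat -> fps R) :
  symplectic_basis phis ->
  forall phi : fps R, symplectic phi ->
    exists! a : nat -> Cplx R,
      (forall k : nat, in_mpow (k.*2 + 2) (residual phi phis a k)) /\
      (forall N : nat, exists K : nat, forall k : nat, (K <= k)%N ->
         in_mpow N (residual phi phis a k)).
Proof.
move=> basis phi sympl_phi.
have res k : in_mpow (k.*2 + 2) (residual phi phis (symplectic_coef phis phi) k).
  by rewrite addn2 -doubleS; apply: residual_symplectic_coef.
exists (symplectic_coef phis phi); split.
  split=> // N; exists N => k le_Nk; apply: in_mpowW (res k).
  by rewrite -addnn -addnA (leq_trans le_Nk) ?leq_addr.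
move=> a [res_a _]; apply: functional_extensionality => k.
by rewrite (symplectic_coef_unique basis sympl_phi res_a).
Qed.
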